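(* Let $X$ be a set with at least three points, let $z_1\ne z_2$ be complex numbers, and let $f:\mathcal{P}(X)\setminus\{\varnothing\}\to\{z_1,z_2\}$ be a surjection such that $f(A)+f(B)=f(A\cup B)$ for all nonempty $A,B\subseteq X$ with $A\cap B=\varnothing$. Then $0\in\{z_1,z_2\}$, the family $f^{-1}(f(X))$ is an ultrafilter on $X$, and $\{\varnothing\}\cup f^{-1}(f(X))$ is a connected door topology on $X$.
   Context: $\mathcal{P}(X)$ denotes the power set of $X$. A topology on $X$ is a connected door topology if every proper nonempty subset of $X$ is either open or closed, but not both. *)

(* complex numbers modelled as R * R (only addition is needed). *)
From Stdlib Require Import Reals.
Open Scope R_scope.

Definition Cplx : Type := (R * R)%type.
Definition C0 : Cplx := (0, 0).
Definition Cadd (z w : Cplx) : Cplx := (fst z + fst w, snd z + snd w).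

Definition nonempty {X : Type} (A : X -> Prop) : Prop := exists x, A x.
Definition emptyset {X : Type} (A : X -> Prop) : Prop := forall x, ~ A x.
Definition setU {X : Type} (A B : X -> Prop) : X -> Prop := fun x => A x \/ B x.
Definition setI {X : Type} (A B : X -> Prop) : X -> Prop := fun x => A x /\ B x.
Definition setC {X : Type} (A : X -> Prop) : X -> Prop := fun x => ~ A x.
Definition setT {X : Type} : X -> Prop := fun _ => True.
Definition disjoint {X : Type} (A B : X -> Prop) : Prop := forall x, ~ (A x /\ B x).
Definition subset {X : Type} (A B : X -> Prop) : Prop := forall x, A x -> B x.
Definition proper {X : Type} (A : X -> Prop) : Prop := exists x, ~ A x.

Definition ultrafilter {X : Type} (U : (X -> Prop) -> Prop) : Prop :=
  U setT /\
  (forall A, U A -> nonempty A) /\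
  (forall A B, U A -> subset A B -> U B) /\
  (forall A B, U A -> U B -> U (setI A B)) /\
  (forall A, U A \/ U (setC A)).

Definition is_topology {X : Type} (T : (X -> Prop) -> Prop) : Prop :=
  (forall A, emptyset A -> T A) /\
  T setT /\
  (forall F : (X -> Prop) -> Prop, (forall A, F A -> T A) ->
      T (fun x => exists A, F A /\ A x)) /\
  (forall A B, T A -> T B -> T (setI A B)).

Definition connected_door_topology {X : Type} (T : (X -> Prop) -> Prop) : Prop :=
  is_topology T /\
  forall A, nonempty A -> proper A ->
    (T A /\ ~ T (setC A)) \/ (~ T A /\ T (setC A)).

(* Three disjoint nonempty sets force one of the two values to be 0: otherwise
   the sums f P + f Q and f P + f Q + f R cannot all stay in {z1, z2}.  Call the
   other value u.  Two disjoint nonempty sets cannot both have value u (their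
   union would have value 2u), and a set of value u splits into two disjoint
   pieces only as u + 0.  Hence the sets of value u form an ultrafilter, and
   for any ultrafilter the family of its members together with the empty set
   is a topology in which a proper nonempty set is open exactly when its
   complement is not. *)

From Stdlib Require Import Reals Lra Classical FunctionalExtensionality PropExtensionality.

Lemma Cadd_C0r (z : Cplx) : Cadd z C0 = z.
Proof. destruct z; unfold Cadd, C0; simpl; f_equal; ring. Qed.

Lemma Cadd_cancel_l (z w : Cplx) : Cadd z w = z -> w = C0.
Proof. destruct z, w; unfold Cadd, C0; simpl; intro H; inversion H; f_equal; lra. Qed.

Lemma Cadd_cancel_r (z w : Cplx) : Cadd z w = w -> z = C0.
Proof. destruct z, w; unfold Cadd, C0; simpl; intro H; inversion H; f_equal; lra. Qed.

Lemma Cadd_diag_C0 (z : Cplx) : Cadd z z = C0 -> z = C0.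
Proof. destruct z; unfold Cadd, C0; simpl; intro H; inversion H; f_equal; lra. Qed.

Lemma Cadd_diag_swap_C0 (z w : Cplx) : Cadd z z = w -> Cadd w w = z -> z = C0.
Proof.
  destruct z, w; unfold Cadd, C0; simpl; intros H H'.
  inversion H; inversion H'; f_equal; lra.
Qed.

Lemma pair_closed_sums_C0 (z1 z2 x y r : Cplx) :
  (x = z1 \/ x = z2) -> (y = z1 \/ y = z2) -> (r = z1 \/ r = z2) ->
  (Cadd x y = z1 \/ Cadd x y = z2) ->
  (Cadd (Cadd x y) r = z1 \/ Cadd (Cadd x y) r = z2) -> z1 = C0 \/ z2 = C0.
Proof.
  intros [-> | ->] [-> | ->] [-> | ->] [Hs | Hs] Ht; try rewrite Hs in Ht;
  try destruct Ht as [Ht | Ht];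
  first [ left; solve [ eapply Cadd_cancel_l; eassumption
                      | eapply Cadd_cancel_r; eassumption
                      | eapply Cadd_diag_swap_C0; eassumption ]
        | right; solve [ eapply Cadd_cancel_l; eassumption
                       | eapply Cadd_cancel_r; eassumption
                       | eapply Cadd_diag_swap_C0; eassumption ] ].
Qed.

Lemma set_ext {X : Type} (A B : X -> Prop) : (forall x, A x <-> B x) -> A = B.
Proof.
  intro H; apply functional_extensionality; intro x.
  apply propositional_extensionality; auto.
Qed.

Definition setD {X : Type} (A B : X -> Prop) : X -> Prop := fun x => A x /\ ~ B x.

Ltac set_solve :=
  intros; apply set_ext; intro x;
  unfold setU, setI, setD, setC, setT, nonempty, emptyset, subset in *;
  firstorder (try (apply NNPP; firstorder)).

Section SetAlgebra.
Context {X : Type}.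
Implicit Types A B D : X -> Prop.

Lemma setU_empty A D : ~ nonempty D -> setU A D = A.
Proof. set_solve. Qed.

Lemma setUD_subset A B : subset A B -> setU A (setD B A) = B.
Proof. set_solve. Qed.

Lemma setID A B : setU (setI A B) (setD A B) = A.
Proof. set_solve. Qed.

Lemma setI_eq_nosetD A B : ~ nonempty (setD A B) -> setI A B = A.
Proof. set_solve. Qed.

Lemma setD_eq_nosetI A B : ~ nonempty (setI A B) -> setD A B = A.
Proof. set_solve. Qed.

Lemma setTI A : setI setT A = A.
Proof. set_solve. Qed.

Lemma setTD A : setD setT A = setC A.
Proof. set_solve. Qed.

Lemma nonempty_setU_l A B : nonempty A -> nonempty (setU A B).
Proof. intros [x Ax]; exists x; left; exact Ax. Qed.

Lemma disjoint_setID A B : disjoint (setI A B) (setD A B).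
Proof. intros x [[_ h] [_ h']]; auto. Qed.

Lemma disjoint_setD_r A B : disjoint A (setD B A).
Proof. intros x [h [_ h']]; auto. Qed.

Lemma disjoint_setD_l A B : disjoint (setD A B) B.
Proof. intros x [[_ h] h']; auto. Qed.

End SetAlgebra.

Section UltrafilterTopology.
Variables (X : Type) (U : (X -> Prop) -> Prop).
Hypothesis hU : ultrafilter U.

Lemma ultrafilter_setC A : U A -> ~ U (setC A).
Proof.
  destruct hU as (_ & hne & _ & hI & _); intros UA UC.
  destruct (hne _ (hI _ _ UA UC)) as [x [Ax nAx]]; auto.
Qed.

Lemma ultrafilter_door_topology :
  connected_door_topology (fun A => emptyset A \/ U A).
Proof.
  destruct hU as (hT & _ & hup & hI & hC); split; [repeat split|].
  - intros A; left; assumption.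
  - right; exact hT.
  - intros F hF.
    destruct (classic (exists A, F A /\ U A)) as [[A [FA UA]] | none].
    + right; apply (hup A); [exact UA | intros x Ax; exists A; auto].
    + left; intros x [A [FA Ax]].
      destruct (hF A FA) as [e | UA]; [exact (e x Ax) | apply none; eauto].
  - intros A B [eA | UA] [eB | UB];
      try (left; intros x [h h']; solve [exact (eA x h) | exact (eB x h')]).
    right; exact (hI _ _ UA UB).
  - intros A [a Aa] [b nAb].
    assert (A_not_empty : ~ emptyset A) by (intro e; exact (e a Aa)).
    assert (C_not_empty : ~ emptyset (setC A)) by (intro e; exact (e b nAb)).
    destruct (hC A) as [UA | UC].
    + left; split; [right; exact UA|].
      intros [e | UC]; [exact (C_not_empty e) | exact (ultrafilter_setC _ UA UC)].
    + right; split; [|right; exact UC].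
      intros [e | UA]; [exact (A_not_empty e) | exact (ultrafilter_setC _ UA UC)].
Qed.

End UltrafilterTopology.

Section ValuesZeroOrU.
Variables (X : Type) (f : (X -> Prop) -> Cplx) (u : Cplx).
Hypothesis u_neq0 : u <> C0.
Hypothesis f_range : forall A, nonempty A -> f A = C0 \/ f A = u.
Hypothesis f_add : forall A B, nonempty A -> nonempty B -> disjoint A B ->
  Cadd (f A) (f B) = f (setU A B).
Hypothesis f_hits_u : exists A, nonempty A /\ f A = u.

Definition Uf (A : X -> Prop) : Prop := nonempty A /\ f A = u.

Lemma Uf_disjoint A B : Uf A -> Uf B -> ~ disjoint A B.
Proof.
  intros [nA fA] [nB fB] dAB; apply u_neq0.
  pose proof (f_add _ _ nA nB dAB) as sum; rewrite fA, fB in sum.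
  destruct (f_range _ (nonempty_setU_l A B nA)) as [e | e]; rewrite e in sum.
  - exact (Cadd_diag_C0 _ sum).
  - exact (Cadd_cancel_l _ _ sum).
Qed.

Lemma Uf_grow A D : Uf A -> disjoint A D -> Uf (setU A D).
Proof.
  intros [nA fA] dAD.
  destruct (classic (nonempty D)) as [nD | eD];
    [| rewrite setU_empty by exact eD; split; assumption].
  split; [exact (nonempty_setU_l A D nA)|].
  rewrite <- (f_add _ _ nA nD dAD), fA.
  destruct (f_range _ nD) as [e | e].
  - rewrite e; apply Cadd_C0r.
  - exfalso; exact (Uf_disjoint _ _ (conj nA fA) (conj nD e) dAD).
Qed.

Lemma Uf_split A B : Uf A -> Uf (setI A B) \/ Uf (setD A B).
Proof.
  intros [nA fA].
  destruct (classic (nonempty (setI A B))) as [nI | eI];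
    [| right; rewrite setD_eq_nosetI by exact eI; split; assumption].
  destruct (classic (nonempty (setD A B))) as [nD | eD];
    [| left; rewrite setI_eq_nosetD by exact eD; split; assumption].
  pose proof (f_add _ _ nI nD (disjoint_setID A B)) as sum.
  rewrite setID, fA in sum.
  destruct (f_range _ nI) as [eI | eI]; [| left; split; assumption].
  destruct (f_range _ nD) as [eD | eD]; [| right; split; assumption].
  rewrite eI, eD, Cadd_C0r in sum; exfalso; exact (u_neq0 (eq_sym sum)).
Qed.

Lemma Uf_superset A B : Uf A -> subset A B -> Uf B.
Proof.
  intros UA sAB; rewrite <- (setUD_subset A B sAB).
  exact (Uf_grow _ _ UA (disjoint_setD_r A B)).
Qed.

Lemma Uf_setT : Uf setT.
Proof.
  destruct f_hits_u as [A UA].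
  apply (Uf_superset A); [exact UA | intros x _; exact I].
Qed.

Lemma Uf_setI A B : Uf A -> Uf B -> Uf (setI A B).
Proof.
  intros UA UB; destruct (Uf_split A B UA) as [UI | UD]; [exact UI|].
  exfalso; exact (Uf_disjoint _ _ UD UB (disjoint_setD_l A B)).
Qed.

Lemma Uf_setC A : Uf A \/ Uf (setC A).
Proof. pose proof (Uf_split setT A Uf_setT) as h; rewrite setTI, setTD in h; exact h. Qed.

Lemma ultrafilter_Uf : ultrafilter Uf.
Proof.
  refine (conj Uf_setT (conj _ (conj Uf_superset (conj Uf_setI Uf_setC)))).
  intros A [nA _]; exact nA.
Qed.

Lemma ultrafilter_f_setT : ultrafilter (fun A => nonempty A /\ f A = f setT).
Proof. destruct Uf_setT as [_ ->]; exact ultrafilter_Uf. Qed.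

End ValuesZeroOrU.

Lemma value_C0_of_three_points (X : Type) (z1 z2 : Cplx) (f : (X -> Prop) -> Cplx)
  (a b c : X) (hab : a <> b) (hac : a <> c) (hbc : b <> c)
  (f_range : forall A, nonempty A -> f A = z1 \/ f A = z2)
  (f_add : forall A B, nonempty A -> nonempty B -> disjoint A B ->
     Cadd (f A) (f B) = f (setU A B)) :
  z1 = C0 \/ z2 = C0.
Proof.
  set (P := fun x : X => x = a); set (Q := fun x : X => x = b).
  set (R := fun x : X => x <> a /\ x <> b).
  assert (nP : nonempty P) by (exists a; reflexivity).
  assert (nQ : nonempty Q) by (exists b; reflexivity).
  assert (nR : nonempty R) by (exists c; split; congruence).
  assert (dPQ : disjoint P Q) by (intros x [-> ->]; exact (hab eq_refl)).
  assert (dPQR : disjoint (setU P Q) R) by (intros x [[-> | ->] [h h']]; auto).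
  pose proof (f_add _ _ nP nQ dPQ) as sumPQ.
  pose proof (f_add _ _ (nonempty_setU_l P Q nP) nR dPQR) as sumPQR.
  apply (pair_closed_sums_C0 z1 z2 (f P) (f Q) (f R)); auto.
  - rewrite sumPQ; apply f_range, nonempty_setU_l, nP.
  - rewrite sumPQ, sumPQR; apply f_range, nonempty_setU_l, nonempty_setU_l, nP.
Qed.

Theorem theorem2 (X : Type)
  (H3 : exists a b c : X, a <> b /\ a <> c /\ b <> c)
  (z1 z2 : Cplx) (hz : z1 <> z2)
  (f : (X -> Prop) -> Cplx)
  (hrange : forall A, nonempty A -> f A = z1 \/ f A = z2)
  (hsurj1 : exists A, nonempty A /\ f A = z1)
  (hsurj2 : exists A, nonempty A /\ f A = z2)
  (hadd : forall A B, nonempty A -> nonempty B -> disjoint A B ->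
            Cadd (f A) (f B) = f (setU A B)) :
  (z1 = C0 \/ z2 = C0) /\
  ultrafilter (fun A => nonempty A /\ f A = f setT) /\
  connected_door_topology
    (fun A => emptyset A \/ (nonempty A /\ f A = f setT)).
Proof.
  destruct H3 as (a & b & c & hab & hac & hbc).
  assert (zero : z1 = C0 \/ z2 = C0)
    by exact (value_C0_of_three_points X z1 z2 f a b c hab hac hbc hrange hadd).
  assert (hU : ultrafilter (fun A => nonempty A /\ f A = f setT)).
  { destruct zero as [-> | ->].
    - apply (ultrafilter_f_setT X f z2); auto.
    - apply (ultrafilter_f_setT X f z1); auto.
      intros A nA; apply or_comm, hrange, nA. }
  split; [exact zero | split; [exact hU | exact (ultrafilter_door_topology _ _ hU)]].
Qed.
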